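(* Let $K$ be a number field and let $\alpha,\beta$ be multiplicatively independent positive rational numbers. Let $F\in K[[x^{\mathbb{R}}]]$ be a Hahn series satisfying nontrivial homogeneous equations $\sum_{i=0}^{d_1}P_i(x)F(x^{\alpha^i})=0$ and $\sum_{i=0}^{d_2}Q_i(x)F(x^{\beta^i})=0$ with $P_i,Q_i\in K[x]$, $P_{d_1}\ne0$, $Q_{d_2}\ne0$. Suppose there are $s,s'\in\mathbb{R}$ with ${}_{\alpha^{\mathbb{Z}}s+\mathbb{Z}[\alpha,\alpha^{-1}]}[F]\ne0$ and ${}_{\beta^{\mathbb{Z}}s'+\mathbb{Z}[\beta,\beta^{-1}]}[F]\ne0$. Then there is a positive integer $n$ such that ${}_{\mathbb{Z}[\alpha,\alpha^{-1}]}[F(x^n)]\ne0$ and ${}_{\mathbb{Z}[\beta,\beta^{-1}]}[F(x^n)]\ne0$.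
   Context: $K[[x^{\mathbb{R}}]]$ is the field of Hahn series $\sum_{i\in\mathbb{R}} f_ix^i$ ($f_i\in K$) with well-ordered support; $F(x^\gamma)=\sum_if_ix^{\gamma i}$. Positive reals are multiplicatively independent if $\log\alpha/\log\beta\notin\mathbb{Q}$. $\gamma^{\mathbb{Z}}s+\mathbb{Z}[\gamma,\gamma^{-1}]=\{\gamma^m s+r: m\in\mathbb{Z}, r\in\mathbb{Z}[\gamma,\gamma^{-1}]\}$, with $\mathbb{Z}[\gamma,\gamma^{-1}]$ the subring of $\mathbb{Q}$ generated by $\gamma^{\pm1}$. For $A\subseteq\mathbb{R}$, ${}_A[G]$ is the Hahn series of the terms of $G$ with exponents in $A$. *)

From HB Require Import structures.
From mathcomp Require Import all_boot all_order all_algebra all_field.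
From mathcomp Require Import all_classical all_reals all_analysis.
Set Implicit Arguments. Unset Strict Implicit. Unset Printing Implicit Defensive.
Import Order.TTheory GRing.Theory Num.Theory.
Local Open Scope ring_scope.

(* A Hahn series in K[[x^R]] is given by its coefficient function
   f : R -> K (f t = coefficient of x^t) whose support is well-ordered. *)
Definition well_ordered_support (R : realType) (K : fieldType) (f : R -> K) : Prop :=
  forall S : R -> Prop, (forall t, S t -> f t != 0) -> (exists t, S t) ->
    exists m, S m /\ forall t, S t -> m <= t.

Definition is_rational (R : realType) (x : R) : Prop := exists q : rat, x = ratr q.

Definition mult_indep (R : realType) (a b : R) : Prop :=
  ~ is_rational (ln a / ln b).

Definition Zring (R : realType) (g : R) (x : R) : Prop :=
  exists s : seq (int * int), x = \sum_(p <- s) (p.1)%:~R * g ^ p.2.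

Definition shifted_Zring (R : realType) (g s : R) (x : R) : Prop :=
  exists (m : int) (r : R), Zring g r /\ x = g ^ m * s + r.

(* coefficient at t of  sum_{i=0}^{d} P_i(x) F(x^{g^i}),
   where F(x^c) has coefficient f (t / c) at t. *)
Definition mahler_coef (R : realType) (K : fieldType) (g : R) (d : nat)
    (P : nat -> {poly K}) (f : R -> K) (t : R) : K :=
  \sum_(i < d.+1) \sum_(k < size (P i)) (P i)`_k * f ((t - k%:R) / g ^+ i).

Definition mahler_eq (R : realType) (K : fieldType) (g : R) (d : nat)
    (P : nat -> {poly K}) (f : R -> K) : Prop :=
  forall t, mahler_coef g d P f t = 0.

(* _A[G] != 0 : G has a nonzero coefficient at some exponent in A *)
Definition restr_nonzero (R : realType) (K : fieldType) (A : R -> Prop) (f : R -> K) : Prop :=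
  exists t, A t /\ f t != 0.

From HB Require Import structures.
From mathcomp Require Import all_boot all_order all_algebra all_field.
From mathcomp Require Import all_classical all_reals all_analysis.
From mathcomp Require Import lra.
Set Implicit Arguments. Unset Strict Implicit. Unset Printing Implicit Defensive.
Import Order.TTheory GRing.Theory Num.Theory.
Local Open Scope ring_scope.

(* The least exponent v of F is rational.  In the alpha-Mahler equation the
   summands x^k F(x^(alpha^i)) have leading exponents k + alpha^i v; if v were
   irrational these would be pairwise distinct (alpha <> 1 being rational), so
   the smallest one could not be cancelled.  Writing v = p / n, the series
   F(x^n) has the nonzero coefficient f v at the integer p, and integers lie in
   every ring Z[g, g^-1].  Beyond F <> 0, only the alpha-equation is used. *)

Lemma mult_indep_neq1 (R : realType) (a b : R) : mult_indep a b -> a != 1.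
Proof.
by move=> ab; apply/eqP => a1; apply: ab; exists 0; rewrite a1 ln1 mul0r rmorph0.
Qed.

Lemma Zring_int (R : realType) (g : R) (m : int) : Zring g m%:~R.
Proof. by exists [:: (m, 0)]; rewrite big_seq1 expr0z mulr1. Qed.

Definition term_exponent (R : realType) (a v : R) (i k : nat) : R :=
  k%:R + a ^+ i * v.

Lemma term_exponent_inj (R : realType) (alpha : rat) (v : R) :
  0 < alpha -> alpha != 1 -> ~ is_rational v ->
  forall i j k l : nat,
    term_exponent (ratr alpha) v i k = term_exponent (ratr alpha) v j l ->
    i = j /\ k = l.
Proof.
move=> a_gt0 a_neq1 v_irr i j k l; rewrite /term_exponent => E.
have [ij|i_neq_j] := eqVneq i j.
  by subst j; split=> //; move: E => /addIr /eqP; rewrite eqr_nat => /eqP.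
exfalso; apply: v_irr.
have pow_neq : (ratr alpha : R) ^+ j - ratr alpha ^+ i != 0.
  rewrite subr_eq0 -!rmorphXn /= (inj_eq (fmorph_inj _)).
  by rewrite (inj_eq (ieexprIn a_gt0 a_neq1)) eq_sym.
exists ((k%:R - l%:R) / (alpha ^+ j - alpha ^+ i)).
rewrite fmorph_div /= !rmorphB /= !rmorphXn /= !ratr_nat.
apply: (mulIf pow_neq); rewrite divfK // mulrBr ![v * _]mulrC.
lra.
Qed.

Lemma exists_least_term_exponent (R : realType) (K : fieldType) (a v : R)
    (d : nat) (P : nat -> {poly K}) :
  P d != 0 ->
  exists (i0 : 'I_d.+1) (k0 : nat), (P i0)`_k0 != 0 /\
    forall (i : 'I_d.+1) (k : nat), (P i)`_k != 0 ->
      term_exponent a v i0 k0 <= term_exponent a v i k.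
Proof.
move=> Pd_neq0.
pose N := (\max_(i < d.+1) size (P i))%N.
have lt_N (i : 'I_d.+1) k : (P i)`_k != 0 -> (k < N)%N.
  move=> Pik; apply: leq_trans (leq_bigmax_cond i isT).
  by rewrite ltnNge; apply: contra Pik => ?; rewrite nth_default.
pose supp (p : 'I_d.+1 * 'I_N) := (P p.1)`_p.2 != 0.
have lead_neq0 : (P (@ord_max d))`_(size (P d)).-1 != 0.
  by rewrite -lead_coefE lead_coef_eq0.
pose lead : 'I_d.+1 * 'I_N := (ord_max, Ordinal (lt_N _ _ lead_neq0)).
have [[i0 k0] Pik0 least] :=
  @arg_minP _ R _ lead supp (fun p => term_exponent a v p.1 p.2) lead_neq0.
exists i0, k0; split=> // i k Pik.
exact: (least (i, Ordinal (lt_N i k Pik))).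
Qed.

Section LeastTerm.

Variables (R : realType) (K : fieldType) (a v : R) (d : nat).
Variables (P : nat -> {poly K}) (f : R -> K).
Hypotheses (a_gt0 : 0 < a) (v_least : forall t, f t != 0 -> v <= t).

Lemma coef_below_term_exponent (i k : nat) (t : R) :
  t < term_exponent a v i k -> f ((t - k%:R) / a ^+ i) = 0.
Proof.
apply: contraTeq => /v_least; rewrite ler_pdivlMr ?exprn_gt0 // -leNgt mulrC.
by rewrite /term_exponent; move: (a ^+ i * v) => x; lra.
Qed.

Hypothesis exponent_inj : forall i j k l : nat,
  term_exponent a v i k = term_exponent a v j l -> i = j /\ k = l.

Lemma mahler_coef_least_term (i0 : 'I_d.+1) (k0 : nat) :
  (P i0)`_k0 != 0 ->
  (forall (i : 'I_d.+1) (k : nat), (P i)`_k != 0 ->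
     term_exponent a v i0 k0 <= term_exponent a v i k) ->
  mahler_coef a d P f (term_exponent a v i0 k0) = (P i0)`_k0 * f v.
Proof.
move=> P_i0k0 least; set t0 := term_exponent a v i0 k0.
have other_terms (i : 'I_d.+1) (k : nat) : (i : nat, k) != (i0 : nat, k0) ->
    (P i)`_k * f ((t0 - k%:R) / a ^+ i) = 0.
  move=> ik_neq; have [->|Pik] := eqVneq (P i)`_k 0; first by rewrite mul0r.
  rewrite coef_below_term_exponent ?mulr0 // lt_def least // andbT.
  by apply: contra ik_neq => /eqP/esym/exponent_inj[-> ->].
have k0_lt : (k0 < size (P i0))%N.
  by rewrite ltnNge; apply: contra P_i0k0 => ?; rewrite nth_default.
rewrite /mahler_coef (bigD1 i0) //= (bigD1 (Ordinal k0_lt)) //=.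
rewrite big1 => [|k k_neq]; last first.
  by apply: other_terms; apply: contra k_neq => /eqP[k_eq]; apply/eqP/val_inj.
rewrite big1 => [|i i_neq]; last first.
  apply: big1 => k _; apply: other_terms.
  by apply: contra i_neq => /eqP[i_eq _]; apply/eqP/val_inj.
rewrite !addr0 /t0 /term_exponent addrC addKr [a ^+ _ * v]mulrC.
by rewrite mulfK // expf_neq0 ?gt_eqF.
Qed.

End LeastTerm.

Lemma mahler_least_exponent_rational (R : realType) (K : fieldType) (alpha : rat)
    (d : nat) (P : nat -> {poly K}) (f : R -> K) (v : R) :
  0 < alpha -> alpha != 1 -> P d != 0 -> mahler_eq (ratr alpha) d P f ->
  f v != 0 -> (forall t, f t != 0 -> v <= t) -> is_rational v.
Proof.
move=> a_gt0 a_neq1 Pd_neq0 mahler fv v_least; apply: contrapT => v_irr.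
have [i0 [k0 [P_i0k0 least]]] :=
  exists_least_term_exponent (ratr alpha) v Pd_neq0.
have := mahler (term_exponent (ratr alpha) v i0 k0).
rewrite (mahler_coef_least_term _ v_least _ P_i0k0 least) ?ltr0q //.
  by apply/eqP; rewrite mulf_neq0.
exact: term_exponent_inj.
Qed.

Lemma rational_support_dilate (R : realType) (K : fieldType) (f : R -> K) (v : R) :
  is_rational v -> f v != 0 ->
  exists n : nat, (0 < n)%N /\
    forall g : R, restr_nonzero (Zring g) (fun t => f (t / n%:R)).
Proof.
move=> [q ->] fq; exists `|denq q|%N; split; first by rewrite absz_gt0 denq_neq0.
move=> g; exists (numq q)%:~R; split; first exact: Zring_int.
(* [ratr q] unfolds to [(numq q)%:~R / (denq q)%:~R]. *)
by rewrite natr_absz gtr0_norm ?denq_gt0.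
Qed.

Theorem mainTheorem11 (R : realType) (K : fieldExtType rat) (alpha beta : rat)
  (f : R -> K) (d1 d2 : nat) (P Q : nat -> {poly K}) :
  0 < alpha -> 0 < beta -> mult_indep (ratr alpha : R) (ratr beta) ->
  well_ordered_support f ->
  P d1 != 0 -> mahler_eq (ratr alpha) d1 P f ->
  Q d2 != 0 -> mahler_eq (ratr beta) d2 Q f ->
  (exists s : R, restr_nonzero (shifted_Zring (ratr alpha) s) f) ->
  (exists s' : R, restr_nonzero (shifted_Zring (ratr beta) s') f) ->
  exists n : nat, (0 < n)%N /\
    restr_nonzero (Zring (ratr alpha)) (fun t => f (t / n%:R)) /\
    restr_nonzero (Zring (ratr beta)) (fun t => f (t / n%:R)).
Proof.
move=> a_gt0 _ indep wos Pd_neq0 mahler _ _ [_ [t [_ ft]]] _.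
have a_neq1 : alpha != 1.
  by apply: contraNneq (mult_indep_neq1 indep) => ->; rewrite rmorph1.
have [v [fv v_least]] := wos (fun t => f t != 0) (fun _ => id) (ex_intro _ t ft).
have v_rat := mahler_least_exponent_rational a_gt0 a_neq1 Pd_neq0 mahler fv v_least.
have [n [n_gt0 dilate]] := rational_support_dilate v_rat fv.
by exists n.
Qed.
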